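(* Let $n\geq 1$ and $k\geq 0$ be integers and $d_1,\dots,d_k$ positive integers with $\sum_{i=1}^k d_i\leq n+1$. Then $F_n(t;d_1,\dots,d_k)$ is a polynomial in $t$ with non-negative coefficients.
   Context: For an integer $m>0$, $\binom{t}{m}=\frac{1}{m!}\prod_{i=0}^{m-1}(t-i)$. For $I\subset\{1,\dots,k\}$, $d_I=\sum_{i\in I}d_i$ (with $d_\emptyset=0$). Define $F_n(t;d_1,\dots,d_k)=\sum_{I\subset\{1,\dots,k\}}(-1)^{|I|}\binom{t+n-d_I}{n}$. *)

From mathcomp Require Import all_boot all_order all_algebra.
Set Implicit Arguments. Unset Strict Implicit. Unset Printing Implicit Defensive.
Import Order.TTheory GRing.Theory Num.Theory.
Local Open Scope ring_scope.

Definition binom_poly (p : {poly rat}) (m : nat) : {poly rat} :=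
  (m`!%:R)^-1 *: \prod_(i < m) (p - (i%:R)%:P).

Definition dsum (k : nat) (d : 'I_k -> nat) (I : {set 'I_k}) : nat :=
  (\sum_(i in I) d i)%N.

Definition Fpoly (n k : nat) (d : 'I_k -> nat) : {poly rat} :=
  \sum_(I : {set 'I_k})
     (-1) ^+ #|I| *: binom_poly ('X + ((n%:Z - (dsum d I)%:Z)%:~R)%:P) n.

From mathcomp Require Import all_boot all_order all_algebra all_field.
From mathcomp Require Import ring zify.
Set Implicit Arguments. Unset Strict Implicit. Unset Printing Implicit Defensive.
Import Order.TTheory GRing.Theory Num.Theory.
Local Open Scope ring_scope.

(* Let E be the shift P(t) |-> P(t - 1).  Then F_n = prod_i (1 - E^(d_i)) applied
   to binom(t + n, n) = (t + 1)...(t + n) / n!, and 1 - x^d = -(x - 1) prod (x - w)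
   over the d-th roots of unity w <> 1.  Each factor E - 1 turns (t + 1)...(t + m)
   into -m (t + 1)...(t + m - 1), so (E - 1)^k leaves a nonzero multiple of
   (t + 1)...(t + n - k) (and kills binom(t + n, n) when k = n + 1).  A factor
   E - w with |w| = 1, w <> 1 turns p(t) (t + 1)...(t + N) into q(t) (t + 1)...(t + N - 1),
   and if all roots of p lie on Re t = -(N + 1)/2 then all roots of q lie on
   Re t = -N/2: at a root |t| |p(t - 1)| = |t + N| |p(t)|, while |t + N|^2 - |t|^2
   and each |t - r|^2 - |t - 1 - r|^2 (r a root of p) have the sign of 2 Re t + N.
   As at most n + 1 - k factors E - w occur, all roots of F_n have Re t <= 0, so the
   real polynomial F_n is a multiple of a product of factors t + a and t^2 + b t + c
   with a, b, c >= 0; the multiplier is positive because F_n(1) = n + 1 - #{i | d_i = 1} > 0. *)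

Section ShiftOperator.
Variable R : comNzRingType.
Implicit Types (A B P Q : {poly R}).

Definition shiftp i P := P \Po ('X - i%:R%:P).

(* [shift_op A P] is A(E) P. *)
Definition shift_op A P := \sum_(i < size A) A`_i *: shiftp i P.

Lemma shiftp0 P : shiftp 0 P = P.
Proof. by rewrite /shiftp subr0 comp_polyXr. Qed.

Lemma shiftpD i j P : shiftp (i + j) P = shiftp i (shiftp j P).
Proof.
rewrite /shiftp -comp_polyA comp_polyB comp_polyX comp_polyC natrD.
by congr (_ \Po _); rewrite rmorphD /= opprD addrA.
Qed.

Lemma shiftpM i P Q : shiftp i (P * Q) = shiftp i P * shiftp i Q.
Proof. exact: comp_polyM. Qed.

Lemma shiftpC i c : shiftp i c%:P = c%:P.
Proof. exact: comp_polyC. Qed.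

Lemma horner_shiftp i P x : (shiftp i P).[x] = P.[x - i%:R].
Proof. by rewrite horner_comp hornerXsubC. Qed.

Lemma shift_op_widen A P N : (size A <= N)%N ->
  shift_op A P = \sum_(i < N) A`_i *: shiftp i P.
Proof.
move=> leAN; rewrite /shift_op (big_ord_widen _ (fun i => A`_i *: shiftp i P) leAN).
rewrite [RHS](bigID (fun i : 'I_N => (i < size A)%N)) /= [X in _ = _ + X]big1 ?addr0 //.
by move=> i; rewrite -leqNgt => le_A_i; rewrite nth_default // scale0r.
Qed.

Lemma shift_opD A B P : shift_op (A + B) P = shift_op A P + shift_op B P.
Proof.
pose N := maxn (size A) (size B).
have leAB : (size (A + B)%R <= N)%N.
  by apply: leq_trans (size_polyD A B) _; rewrite geq_max leq_maxl leq_maxr.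
rewrite (shift_op_widen _ (leq_maxl _ _ : (size A <= N)%N)).
rewrite (shift_op_widen _ (leq_maxr _ _ : (size B <= N)%N)) (shift_op_widen _ leAB).
by rewrite -big_split; apply: eq_bigr => i _; rewrite coefD scalerDl.
Qed.

Lemma shift_opZ c A P : shift_op (c *: A) P = c *: shift_op A P.
Proof.
rewrite (shift_op_widen _ (size_scale_leq _ _)) /shift_op scaler_sumr.
by apply: eq_bigr => i _; rewrite coefZ scalerA.
Qed.

Lemma shift_op_sum (I : Type) (r : seq I) (F : I -> {poly R}) P :
  shift_op (\sum_(j <- r) F j) P = \sum_(j <- r) shift_op (F j) P.
Proof.
elim: r => [|a r IH]; first by rewrite !big_nil /shift_op size_poly0 big_ord0.
by rewrite !big_cons shift_opD IH.
Qed.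

Lemma shift_op0r A : shift_op A 0 = 0.
Proof. by rewrite /shift_op big1 // => i _; rewrite /shiftp comp_poly0 scaler0. Qed.

Lemma shift_opC c P : shift_op c%:P P = c *: P.
Proof. by rewrite (shift_op_widen _ (size_polyC_leq1 c)) big_ord1 coefC shiftp0. Qed.

Lemma shift_op_shiftp A P : shift_op A (shiftp 1 P) = shiftp 1 (shift_op A P).
Proof.
rewrite /shift_op [in RHS]/shiftp raddf_sum; apply: eq_bigr => i _ /=.
by rewrite comp_polyZ -/(shiftp 1 _) -!shiftpD addnC.
Qed.

Lemma shift_opMX A P : shift_op (A * 'X) P = shift_op A (shiftp 1 P).
Proof.
have [->|nzA] := eqVneq A 0; first by rewrite mul0r /shift_op !size_poly0 !big_ord0.
rewrite /shift_op size_mulX // big_ord_recl coefMX /= scale0r add0r.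
by apply: eq_bigr => i _; rewrite coefMX /= -shiftpD addn1.
Qed.

Lemma shift_opM A B P : shift_op (A * B) P = shift_op A (shift_op B P).
Proof.
elim/poly_ind: A B P => [|A c IH] B P.
  by rewrite mul0r /shift_op !size_poly0 !big_ord0.
rewrite mulrDl -mulrA (mulrC 'X) mulrA mul_polyC shift_opD shift_opZ.
by rewrite -mulrA IH shift_opMX shift_opD shift_opMX shift_opC shift_op_shiftp.
Qed.

Lemma shift_opXn s P : shift_op 'X^s P = shiftp s P.
Proof.
elim: s P => [|s IH] P; first by rewrite expr0 shift_opC scale1r shiftp0.
by rewrite exprSr shift_opMX IH -shiftpD addn1.
Qed.

Lemma shift_opXsubC w P : shift_op ('X - w%:P) P = shiftp 1 P - w *: P.
Proof. by rewrite shift_opD -[X in shift_op X P]expr1 shift_opXn -polyCN shift_opC scaleNr. Qed.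

End ShiftOperator.

Section NonnegCoef.
Variable C : numClosedFieldType.
Implicit Types (p q D : {poly C}) (a : C).

Local Notation conjp := (map_poly (@Num.conj C)).

Definition left_roots p := forall t, root p t -> t + t^* <= 0.
Definition nonneg_coef p := forall j, 0 <= p`_j.

Lemma nonneg_coef1 : nonneg_coef 1.
Proof. by move=> j; rewrite coef1; case: (j == 0)%N. Qed.

Lemma nonneg_coefM p q : nonneg_coef p -> nonneg_coef q -> nonneg_coef (p * q).
Proof. by move=> p_ge0 q_ge0 j; rewrite coefM sumr_ge0 // => i _; rewrite mulr_ge0. Qed.

Lemma nonneg_coef_XsubC a : a <= 0 -> nonneg_coef ('X - a%:P).
Proof.
move=> a_le0 j; rewrite coefB coefX coefC.
by case: j => [|[|j]] /=; rewrite ?subr0 ?sub0r ?oppr_ge0 ?ler01 ?subrr.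
Qed.

Lemma nonneg_coef_XsubC_conj a : a + a^* <= 0 ->
  nonneg_coef (('X - a^*%:P) * ('X - a%:P)).
Proof.
move=> re_a_le0 j.
have -> : ('X - a^*%:P) * ('X - a%:P) = 'X^2 + (- (a + a^*))%:P * 'X + (a * a^*)%:P.
  by rewrite polyCN polyCD polyCM; ring.
have : 0 <= - (a + a^*) by rewrite oppr_ge0.
have : 0 <= a * a^* by rewrite -normCK exprn_ge0.
rewrite !coefD coefXn coefCM coefX coefC.
by case: j => [|[|[|j]]] /=; rewrite ?mulr0 ?mulr1 ?add0r ?addr0 ?ler01.
Qed.

Lemma conjp_mulIr D q : D != 0 -> conjp D = D -> conjp (q * D) = q * D -> conjp q = q.
Proof. by move=> nzD DR; rewrite rmorphM /= DR => /(mulIf nzD). Qed.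

Lemma left_roots_mull D q : left_roots (q * D) -> left_roots q.
Proof. by move=> lqD t qt; apply: lqD; rewrite rootM qt. Qed.

Lemma real_left_roots_factor n p : (size p <= n)%N -> conjp p = p -> left_roots p ->
  exists2 M, p = lead_coef p *: M & nonneg_coef M.
Proof.
elim: n p => [|n IH] p le_p_n pR lp.
  exists 1; last exact: nonneg_coef1.
  by move: le_p_n; rewrite leqn0 size_poly_eq0 => /eqP->; rewrite lead_coef0 scale0r.
have [/size1_polyC pC | ] := leqP (size p) 1.
  by exists 1; [rewrite pC lead_coefC alg_polyC | exact: nonneg_coef1].
have split_off q D : p = q * D -> D \is monic -> conjp D = D -> nonneg_coef D ->
    (1 < size D)%N -> exists2 M, p = lead_coef p *: M & nonneg_coef M.
  move=> Dp monD DR D_ge0 gt1D; have nzD : D != 0 by rewrite -size_poly_gt0 ltnW.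
  have qR : conjp q = q by apply: conjp_mulIr nzD DR _; rewrite -Dp.
  have le_q_n : (size q <= n)%N.
    have [->|nzq] := eqVneq q 0; first by rewrite size_poly0.
    move: le_p_n gt1D (nzq); rewrite Dp size_mul // -size_poly_gt0 -subn1.
    by move: (size q) (size D) => a b; lia.
  have lq : left_roots q by apply: (@left_roots_mull D); rewrite -Dp.
  have [M Dq M_ge0] := IH q le_q_n qR lq.
  exists (M * D); last exact: nonneg_coefM.
  by rewrite Dp lead_coefM (eqP monD) mulr1 {1}Dq scalerAl.
move=> /gtn_eqF /closed_rootP [r /factor_theorem [p1 Dp]].
have re_r_le0 : r + r^* <= 0 by apply: lp; rewrite Dp rootM root_XsubC eqxx orbT.
have [rR | r_nR] := eqVneq r^* r.
  apply: (split_off _ _ Dp (monicXsubC r)); rewrite ?size_XsubC //.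
    by rewrite map_polyXsubC /= rR.
  apply: nonneg_coef_XsubC.
  by rewrite -(pmulr_rle0 _ (ltr0Sn C 1)) mulr2n mulrDl mul1r -{2}rR.
have /factor_theorem [q Dp1] : root p1 r^*.
  have : root p r^*.
    by rewrite -pR rootE horner_map /= conjC_eq0 -rootE Dp rootM root_XsubC eqxx orbT.
  by rewrite Dp rootM root_XsubC (negPf r_nR) orbF.
apply: (split_off q (('X - r^*%:P) * ('X - r%:P))).
- by rewrite Dp Dp1 mulrA.
- by rewrite rpredM ?monicXsubC.
- by rewrite rmorphM /= !map_polyXsubC /= conjCK mulrC.
- exact: nonneg_coef_XsubC_conj.
- by rewrite size_mul ?polyXsubC_eq0 // !size_XsubC.
Qed.

Lemma nonneg_coef_horner1 p : nonneg_coef p -> 0 <= p.[1].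
Proof. by move=> p_ge0; rewrite horner_coef sumr_ge0 // => i _; rewrite expr1n mulr1. Qed.

Lemma nonneg_coef_of_left_roots p : conjp p = p -> left_roots p -> 0 < p.[1] ->
  nonneg_coef p.
Proof.
move=> pR lp p1_gt0.
have [M Dp M_ge0] := real_left_roots_factor (leqnn _) pR lp.
have M1_gt0 : 0 < M.[1].
  rewrite lt_def nonneg_coef_horner1 // andbT; apply: contraTneq p1_gt0 => M1_0.
  by rewrite Dp hornerZ M1_0 mulr0 ltxx.
have lc_gt0 : 0 < lead_coef p.
  by move: p1_gt0; rewrite {1}Dp hornerZ pmulr_lgt0.
by move=> j; rewrite Dp coefZ mulr_ge0 // ltW.
Qed.
End NonnegCoef.

Lemma ltr_prod_addr (R : numDomainType) (I : eqType) (r : seq I) (F : I -> R) (s : R) :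
  r != [::] -> 0 < s -> (forall i, 0 <= F i) ->
  \prod_(i <- r) F i < \prod_(i <- r) (F i + s).
Proof.
case: r => // i0 r _ s_gt0 F_ge0; apply: ltr_prod => [|i _]; first by [].
by rewrite F_ge0 ltrDl.
Qed.

Lemma balance_sign_eq0 (R : numDomainType) (x m s B D : R) :
  0 <= x -> 0 <= m -> 0 <= B -> 0 <= D -> s \is Num.real ->
  (0 < s -> D < B) -> (s < 0 -> B < D) -> (x = 0 -> s = m) ->
  x * D = (x + m * s) * B -> s = 0.
Proof.
move=> x_ge0 m_ge0 B_ge0 D_ge0 s_real gtDB ltDB x0 eq_xB.
have [s_lt0 | s_gt0 | //] := real_ltgtP s_real (real0 R).
- have DB := ltDB s_lt0.
  have : x * (D - B) + (- (m * s)) * B == 0 by apply/eqP; rewrite mulrBr eq_xB; ring.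
  have ge0_1 : 0 <= x * (D - B) by rewrite mulr_ge0 // subr_ge0 ltW.
  have ge0_2 : 0 <= - (m * s) * B by rewrite mulr_ge0 // oppr_ge0 mulr_ge0_le0 // ltW.
  rewrite paddr_eq0 //.
  rewrite mulf_eq0 subr_eq0 (gt_eqF DB) orbF => /andP[/eqP/x0 sm _].
  by move: s_lt0; rewrite sm => /(le_lt_trans m_ge0); rewrite ltxx.
- have DB := gtDB s_gt0.
  have : x * (B - D) + (m * s) * B == 0 by apply/eqP; rewrite mulrBr eq_xB; ring.
  have ge0_1 : 0 <= x * (B - D) by rewrite mulr_ge0 // subr_ge0 ltW.
  have ge0_2 : 0 <= m * s * B by rewrite !mulr_ge0 // ltW.
  rewrite paddr_eq0 //.
  rewrite mulf_eq0 subr_eq0 (gt_eqF DB) orbF => /andP[/eqP/x0 sm].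
  by rewrite sm !mulf_eq0 orbb (gt_eqF (le_lt_trans D_ge0 DB)) orbF -sm (gt_eqF s_gt0).
Qed.

Section RootsOnLine.
Variable C : numClosedFieldType.
Implicit Types (p : {poly C}) (t w : C).

Definition roots_on_line p N := forall t, root p t -> t + t^* = - N%:R.

Lemma normsq_horner_factor p (rs : seq C) x :
  p = lead_coef p *: \prod_(z <- rs) ('X - z%:P) ->
  `|p.[x]| ^+ 2 = `|lead_coef p| ^+ 2 * \prod_(z <- rs) `|x - z| ^+ 2.
Proof.
move=> Dp; rewrite {1}Dp hornerZ horner_prod normrM exprMn normr_prod -prodrXl.
by congr (_ * _); apply: eq_bigr => z _; rewrite hornerXsubC.
Qed.

Lemma normsq_sub_root_shift M t r : r + r^* = - M.+1%:R ->
  `|t - r| ^+ 2 = `|t - 1 - r| ^+ 2 + (t + t^* + M%:R).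
Proof.
move=> re_r; have Dr : r^* = - M.+1%:R - r by rewrite -re_r addrC addKr.
by rewrite !normCK !rmorphB /= conjC1 Dr -addn1 natrD; ring.
Qed.

Lemma roots_on_line_normsq_lt p M t : roots_on_line p M.+1 -> (1 < size p)%N ->
  let s := t + t^* + M%:R in
  (0 < s -> `|p.[t - 1]| ^+ 2 < `|p.[t]| ^+ 2) /\
  (s < 0 -> `|p.[t]| ^+ 2 < `|p.[t - 1]| ^+ 2).
Proof.
move=> lp gt1p s; have [rs Dp] := closed_field_poly_normal p.
have nz_lc : lead_coef p != 0 by rewrite lead_coef_eq0 -size_poly_gt0 ltnW.
have rs_nil : rs != [::].
  apply: contraTneq gt1p => rs0; rewrite Dp rs0 big_nil -mul_polyC mulr1.
  by rewrite -leqNgt size_polyC leq_b1.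
have root_rs r : r \in rs -> r + r^* = - M.+1%:R.
  by move=> r_rs; apply: lp; rewrite Dp rootZ // root_prod_XsubC.
have lc_gt0 : 0 < `|lead_coef p| ^+ 2 by rewrite exprn_gt0 // normr_gt0.
rewrite !(normsq_horner_factor _ Dp) !(ltr_pM2l lc_gt0) !big_seq.
split=> [s_gt0 | s_lt0].
  under [X in _ < X]eq_bigr => r r_rs do
    rewrite (normsq_sub_root_shift t (root_rs r r_rs)).
  by rewrite -!big_seq ltr_prod_addr // => r; rewrite exprn_ge0.
under [X in _ < X]eq_bigr => r r_rs do
  rewrite -[`|_| ^+ 2](addrK s) -(normsq_sub_root_shift t (root_rs r r_rs)).
by rewrite -!big_seq ltr_prod_addr ?oppr_gt0 // => r; rewrite exprn_ge0.
Qed.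

Lemma roots_on_line_neq0 p N : roots_on_line p N.+1 -> p != 0.
Proof.
move=> lp; apply/eqP => p0; have := lp 0; rewrite p0 root0 conjC0 addr0 => /(_ isT).
by move/eqP; rewrite eq_sym oppr_eq0 pnatr_eq0.
Qed.

Lemma roots_on_line_step p M w : `|w| = 1 -> w != 1 -> roots_on_line p M.+1 ->
  roots_on_line ('X * shiftp 1 p - w *: (('X + M%:R%:P) * p)) M.
Proof.
move=> w1 w_neq1 lp t; rewrite rootE !hornerE horner_shiftp subr_eq0 => /eqP eq_t.
pose s := t + t^* + M%:R.
suff : s = 0 by move/eqP; rewrite addr_eq0 => /eqP.
have s_real : s \is Num.real.
  by rewrite CrealE /s !rmorphD /= conjCK conjC_nat; apply/eqP; ring.
have normt_M : `|t + M%:R| ^+ 2 = `|t| ^+ 2 + M%:R * s.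
  by rewrite !normCK rmorphD /= conjC_nat /s; ring.
have norm_eq : `|t| ^+ 2 * `|p.[t - 1]| ^+ 2 = (`|t| ^+ 2 + M%:R * s) * `|p.[t]| ^+ 2.
  by rewrite -normt_M -!exprMn -!normrM eq_t /= -mulrA normrM w1 mul1r.
have [/size1_polyC pC | gt1p] := leqP (size p) 1.
  have nz_c : p`_0 != 0 by rewrite -polyC_eq0 -pC (roots_on_line_neq0 lp).
  move: eq_t norm_eq; rewrite pC !hornerC => /(mulIf nz_c) eq_t.
  have nz_c2 : `|p`_0| ^+ 2 != 0 by rewrite expf_neq0 // normr_eq0.
  move/(mulIf nz_c2); rewrite -{1}[`|t| ^+ 2]addr0 => /addrI /esym /eqP.
  rewrite mulf_eq0 pnatr_eq0 => /orP[/eqP M0 | /eqP //].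
  move/eqP: eq_t; rewrite /s M0 addr0 -subr_eq0 -{1}[t]mul1r -mulrBl mulf_eq0.
  by rewrite subr_eq0 eq_sym (negPf w_neq1) => /eqP->; rewrite conjC0 !addr0.
have [gt_s lt_s] := roots_on_line_normsq_lt t lp gt1p.
apply: balance_sign_eq0 norm_eq; rewrite ?exprn_ge0 ?ler0n ?normr_ge0 //.
by move/eqP; rewrite expf_eq0 normr_eq0 => /eqP t0; rewrite /s t0 conjC0 !add0r.
Qed.

End RootsOnLine.

Section RisingFactorial.
Variable R : comNzRingType.

Definition rfact N : {poly R} := \prod_(i < N) ('X + i.+1%:R%:P).

Lemma rfactS N : rfact N.+1 = rfact N * ('X + N.+1%:R%:P).
Proof. by rewrite /rfact big_ord_recr. Qed.

Lemma shiftp_rfactS N : shiftp 1 (rfact N.+1) = 'X * rfact N.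
Proof.
rewrite /rfact big_ord_recl /shiftp comp_polyM comp_polyD comp_polyX comp_polyC subrK.
rewrite rmorph_prod; congr (_ * _).
apply: eq_bigr => i _ /=; rewrite comp_polyD comp_polyX comp_polyC -addrA -polyCN -polyCD.
by rewrite /bump /= add1n -[i.+2]add1n natrD addKr.
Qed.

Lemma shift_op_Xsub1_rfactS c N :
  shift_op ('X - 1) (c *: rfact N.+1) = (- N.+1%:R * c) *: rfact N.
Proof.
rewrite -polyC1 shift_opXsubC /shiftp comp_polyZ -/(shiftp 1 _) shiftp_rfactS rfactS.
by rewrite scale1r -!mul_polyC polyCM polyCN; ring.
Qed.

Lemma shift_op_Xsub1X_rfact c j N :
  shift_op (('X - 1) ^+ j) (c *: rfact (j + N)) =
  ((-1) ^+ j * ((j + N) ^_ j)%:R * c) *: rfact N.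
Proof.
elim: j c => [|j IH] c; first by rewrite !expr0 ffactn0 -polyC1 shift_opC scale1r !mul1r.
rewrite exprSr shift_opM addSn shift_op_Xsub1_rfactS IH ffactSS natrM exprS.
by congr (_ *: _); ring.
Qed.

Lemma shift_op_Xsub1_polyC (c : R) : shift_op ('X - 1) c%:P = 0.
Proof. by rewrite -polyC1 shift_opXsubC shiftpC scale1r subrr. Qed.

End RisingFactorial.
Arguments rfact {R} N.

Section RootChain.
Variable C : numClosedFieldType.
Implicit Types (P p : {poly C}) (w : C) (zs : seq C).

Definition line_rfact N P := exists2 p, P = p * rfact N & roots_on_line p N.+1.

Definition circle_ne1 w := (`|w| == 1) && (w != 1).

Lemma line_rfact_left_roots N P : line_rfact N P -> left_roots P.
Proof.
move=> [p -> lp] t; rewrite rootM => /orP[/lp -> | ]; first by rewrite oppr_le0 ler0n.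
rewrite rootE /rfact horner_prod prodf_seq_eq0 => /hasP[i _ /=].
rewrite !hornerE addr_eq0 => /eqP->.
by rewrite rmorphN /= conjC_nat -opprD oppr_le0 addr_ge0 ?ler0n.
Qed.

Lemma line_rfact_scale c N : c != 0 -> line_rfact N (c *: rfact N).
Proof. by move=> nz_c; exists c%:P => [|t]; rewrite ?mul_polyC // rootC (negPf nz_c). Qed.

Lemma shift_op_XsubC_mul_rfactS w N p :
  shift_op ('X - w%:P) (p * rfact N.+1) =
  ('X * shiftp 1 p - w *: (('X + N.+1%:R%:P) * p)) * rfact N.
Proof.
rewrite shift_opXsubC shiftpM shiftp_rfactS rfactS -!mul_polyC; ring.
Qed.

Lemma line_rfact_step w N P : `|w| = 1 -> w != 1 ->
  line_rfact N.+1 P -> line_rfact N (shift_op ('X - w%:P) P).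
Proof.
move=> w1 w_neq1 [p -> lp]; rewrite shift_op_XsubC_mul_rfactS.
by eexists; [reflexivity | apply: roots_on_line_step].
Qed.

Lemma left_roots_line_rfact0_step w P : `|w| = 1 -> w != 1 ->
  line_rfact 0 P -> left_roots (shift_op ('X - w%:P) P).
Proof.
move=> w1 w_neq1 [p -> lp] t; rewrite /rfact big_ord0 mulr1 shift_opXsubC => root_t.
suff -> : t + t^* = - 0%:R by rewrite oppr0.
apply: (roots_on_line_step w1 w_neq1 lp).
have -> : 'X * shiftp 1 p - w *: (('X + 0%:R%:P) * p) = 'X * (shiftp 1 p - w *: p).
  by rewrite -!mul_polyC; ring.
by rewrite rootM root_t orbT.
Qed.

Lemma line_rfact_shift_op_prod zs N P : (size zs <= N)%N -> all circle_ne1 zs ->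
  line_rfact N P -> line_rfact (N - size zs) (shift_op (\prod_(z <- zs) ('X - z%:P)) P).
Proof.
elim: zs => [|w zs IH] /=; first by rewrite big_nil -polyC1 shift_opC scale1r subn0.
move=> lt_zs_N /andP[/andP[/eqP w1 w_neq1] zs_ne1] lP.
rewrite big_cons shift_opM; apply: line_rfact_step => //.
by rewrite subnSK //; apply: IH => //; apply: ltnW.
Qed.

Lemma left_roots_shift_op_prod zs N P : (size zs <= N.+1)%N -> all circle_ne1 zs ->
  line_rfact N P -> left_roots (shift_op (\prod_(z <- zs) ('X - z%:P)) P).
Proof.
move=> le_zs_N zs_ne1 lP; have [lt_zs_N | ge_zs_N] := ltnP (size zs) N.+1.
  exact/line_rfact_left_roots/(line_rfact_shift_op_prod lt_zs_N zs_ne1 lP).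
case: zs le_zs_N ge_zs_N zs_ne1 => [|w zs] //= le_zs_N ge_zs_N.
move=> /andP[/andP[/eqP w1 w_neq1] zs_ne1].
have eq_zs_N : size zs = N by apply/eqP; rewrite eqn_leq -ltnS le_zs_N.
rewrite big_cons shift_opM; apply: left_roots_line_rfact0_step => //.
by have := @line_rfact_shift_op_prod zs N P; rewrite eq_zs_N subnn; apply.
Qed.
End RootChain.
Arguments circle_ne1 {C} w.

Section BinomialPoly.
Variable K : numFieldType.
Implicit Types (n m s : nat).

Definition binomX n : {poly K} := (n`!%:R)^-1 *: rfact n.

Lemma horner_rfact_nat n m : (rfact n).[m%:R] * m`!%:R = (m + n)`!%:R :> K.
Proof.
elim: n => [|n IH]; first by rewrite /rfact big_ord0 hornerC mul1r addn0.
by rewrite rfactS hornerM mulrAC IH !hornerE -natrD -natrM addnS factS mulnC.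
Qed.

Lemma horner_binomX0 n : (binomX n).[0] = 1.
Proof.
have := horner_rfact_nat n 0; rewrite fact0 mulr1 add0n => rfact0.
by rewrite hornerZ rfact0 mulVf // pnatr_eq0 -lt0n fact_gt0.
Qed.

Lemma horner_binomX1 n : (binomX n).[1] = n.+1%:R.
Proof.
have := horner_rfact_nat n 1; rewrite (_ : 1`! = 1)%N // mulr1 add1n => rfact1.
by rewrite hornerZ rfact1 factS natrM mulrC mulfK // pnatr_eq0 -lt0n fact_gt0.
Qed.

Lemma horner_binomX_eq0 n s : (2 <= s <= n.+1)%N -> (binomX n).[1 - s%:R] = 0.
Proof.
case/andP=> ge2s le_s_n; have lt_s_n : (s - 2 < n)%N by lia.
rewrite hornerZ /rfact horner_prod (bigD1 (Ordinal lt_s_n)) //= !hornerE.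
have -> : (s - 2).+1 = (s - 1)%N by lia.
by rewrite natrB ?(leq_trans _ ge2s) // addrA subrK subrr /= mulr0 mul0r.
Qed.

End BinomialPoly.
Arguments binomX {K} n.

Section BinomialShifts.
Variable K : numFieldType.
Variables (n k : nat) (d : 'I_k -> nat).
Local Notation binomX := (@binomX K n).

Lemma map_Fpoly : map_poly ratr (Fpoly n d) =
  \sum_(I : {set 'I_k}) (-1) ^+ #|I| *: shiftp (dsum d I) binomX.
Proof.
rewrite /Fpoly rmorph_sum; apply: eq_bigr => I _ /=.
rewrite map_polyZ rmorph_sign /binom_poly /binomX map_polyZ fmorphV rmorph_nat /=.
rewrite /shiftp !comp_polyZ; congr (_ *: (_ *: _)).
rewrite rmorph_prod rmorph_prod /rfact (reindex_inj rev_ord_inj) /=.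
apply: eq_bigr => i _.
rewrite rmorphB rmorphD /= map_polyX !map_polyC /= rmorph_int rmorph_nat intrB.
rewrite comp_polyD comp_polyX comp_polyC natrB ?ltn_ord // !polyCB; ring.
Qed.

Lemma sum_sign_Xn_dsum :
  \sum_(I : {set 'I_k}) (-1) ^+ #|I| *: 'X^(dsum d I) =
  \prod_(i < k) (1 - 'X^(d i) : {poly K}).
Proof.
rewrite (eq_bigr (fun i => - 'X^(d i) + 1)) => [|i _]; last by rewrite addrC.
rewrite bigA_distr; apply: eq_bigr => I _.
by rewrite -big_mkcond prodrN prodrXr -mul_polyC rmorph_sign.
Qed.

Lemma map_Fpoly_shift_op :
  map_poly ratr (Fpoly n d) = shift_op (\prod_(i < k) (1 - 'X^(d i))) binomX.
Proof.
rewrite map_Fpoly -sum_sign_Xn_dsum shift_op_sum; apply: eq_bigr => I _.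
by rewrite shift_opZ shift_opXn.
Qed.

Lemma dsum_set0 : dsum d set0 = 0%N.
Proof. exact: big_set0. Qed.

Lemma dsum_card (I : {set 'I_k}) : (forall i, 0 < d i)%N -> (#|I| <= dsum d I)%N.
Proof. by move=> d_gt0; rewrite /dsum -sum1_card leq_sum. Qed.

Lemma dsum_le (I : {set 'I_k}) : (dsum d I <= \sum_(i < k) d i)%N.
Proof. by rewrite /dsum [X in (_ <= X)%N](bigID (mem I)) leq_addr. Qed.

Lemma card_dsum1 : (forall i, 0 < d i)%N -> (#|[set I | dsum d I == 1%N]| <= k)%N.
Proof.
move=> d_gt0; rewrite -[k in (_ <= k)%N]card_ord -[#|'I_k|]bin1 -card_draws.
apply/subset_leq_card/subsetP => I; rewrite !inE => /eqP dsum1.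
rewrite eqn_leq -{1}dsum1 dsum_card // lt0n cards_eq0.
by apply/eqP => I0; move: dsum1; rewrite I0 dsum_set0.
Qed.

Lemma horner_map_Fpoly1 : (forall i, 0 < d i)%N -> (\sum_(i < k) d i <= n.+1)%N ->
  (map_poly ratr (Fpoly n d)).[1] = n.+1%:R - #|[set I | dsum d I == 1%N]|%:R :> K.
Proof.
move=> d_gt0 le_d_n; rewrite map_Fpoly horner_sum (bigD1 set0) //=.
rewrite hornerZ horner_shiftp cards0 dsum_set0 subr0 horner_binomX1 mul1r.
rewrite -sum1_card natr_sum -sumrN big_mkcond [X in _ = _ + X]big_mkcond /=.
congr (_ + _); apply: eq_bigr => I _; rewrite inE hornerZ horner_shiftp.
have le_I : (#|I| <= dsum d I <= n.+1)%N.
  by rewrite dsum_card // (leq_trans (dsum_le I)).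
have [->|nzI] := eqVneq I set0; first by rewrite dsum_set0.
have card_gt0 : (0 < #|I|)%N by rewrite lt0n cards_eq0.
case: (ltngtP (dsum d I) 1) => [| gt1 | eq1]; first by lia.
  by rewrite horner_binomX_eq0 ?mulr0 ?oppr0 //; lia.
have -> : #|I| = 1%N by lia.
by rewrite eq1 subrr horner_binomX0 mulr1.
Qed.

Lemma horner_map_Fpoly1_gt0 : (forall i, 0 < d i)%N -> (\sum_(i < k) d i <= n.+1)%N ->
  (k <= n)%N -> 0 < (map_poly ratr (Fpoly n d)).[1] :> K.
Proof.
move=> d_gt0 le_d_n le_k_n; rewrite horner_map_Fpoly1 // subr_gt0 ltr_nat ltnS.
exact: leq_trans (card_dsum1 d_gt0) le_k_n.
Qed.

End BinomialShifts.

Lemma one_subXn_prim_root (F : fieldType) (z : F) m : m.-primitive_root z ->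
  1 - 'X^m = - (('X - 1) * \prod_(l < m.-1) ('X - (z ^+ l.+1)%:P)).
Proof.
move=> prim_z; rewrite -opprB -(factor_Xn_sub_1 prim_z); congr (- _).
case: m prim_z => [|m] prim_z; first by have := prim_order_gt0 prim_z.
by rewrite big_nat_recl // expr0 polyC1 big_mkord.
Qed.

Lemma circle_ne1_prim_root (C : numClosedFieldType) (z : C) m l :
  m.-primitive_root z -> (l.+1 < m)%N -> circle_ne1 (z ^+ l.+1).
Proof.
move=> prim_z lt_l_m; have m_gt0 := prim_order_gt0 prim_z.
have z1 : `|z| = 1.
  by apply/eqP; rewrite -(pexpr_eq1 m_gt0) // -normrX (prim_expr_order prim_z) normr1.
rewrite /circle_ne1 normrX z1 expr1n eqxx -(expr0 z) (eq_prim_root_expr prim_z).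
by rewrite mod0n modn_small.
Qed.

Lemma left_roots_scale (C : numClosedFieldType) (c : C) (P : {poly C}) :
  c != 0 -> left_roots P -> left_roots (c *: P).
Proof. by move=> nz_c lP t; rewrite rootZ //; apply: lP. Qed.

Lemma conj_map_ratr (C : numClosedFieldType) (P : {poly rat}) :
  map_poly Num.conj (map_poly (ratr : rat -> C) P) = map_poly ratr P.
Proof. by rewrite -map_poly_comp; apply: eq_map_poly => q /=; rewrite fmorph_rat. Qed.

Section UnityRootFactorization.
Variables (n k : nat) (d : 'I_k -> nat).
Hypothesis d_gt0 : forall i, (0 < d i)%N.

Let zeta i : algC := sval (C_prim_root_exists (d_gt0 i)).
Let prim_zeta i : (d i).-primitive_root (zeta i) := svalP (C_prim_root_exists (d_gt0 i)).

Let zs := [seq zeta i ^+ l.+1 | i <- enum 'I_k, l <- iota 0 (d i).-1].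

Lemma prod_one_subXn :
  \prod_(i < k) (1 - 'X^(d i)) = (-1) ^+ k *: (\prod_(z <- zs) ('X - z%:P) * ('X - 1) ^+ k).
Proof.
rewrite (eq_bigr _ (fun i _ => one_subXn_prim_root (prim_zeta i))).
rewrite big_allpairs_dep big_enum /= prodrN card_ord big_split prodr_const card_ord.
rewrite -mul_polyC rmorph_sign; congr (_ * _); rewrite mulrC; congr (_ * _).
apply: eq_bigr => i _.
by rewrite -(big_mkord xpredT (fun l => 'X - (zeta i ^+ l.+1)%:P)) /index_iota subn0.
Qed.

Lemma size_unity_roots : (size zs + k)%N = \sum_(i < k) d i.
Proof.
rewrite size_allpairs_dep sumnE !big_map -enumT big_enum /=.
rewrite -[k in (_ + k)%N]card_ord -sum1_card.
by rewrite -big_split; apply: eq_bigr => i _ /=; rewrite size_iota addn1 prednK.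
Qed.

Lemma unity_roots_circle_ne1 : all circle_ne1 zs.
Proof.
apply/allP => _ /allpairsPdep[i [l [_ l_in ->]]]; rewrite mem_iota in l_in.
by apply: circle_ne1_prim_root (prim_zeta i) _; move: l_in (d_gt0 i); lia.
Qed.

Lemma map_Fpoly_unity_roots : map_poly ratr (Fpoly n d) =
  (-1) ^+ k *: shift_op (\prod_(z <- zs) ('X - z%:P))
                        (shift_op (('X - 1) ^+ k) (binomX n)).
Proof. by rewrite map_Fpoly_shift_op prod_one_subXn shift_opZ shift_opM. Qed.

Lemma Fpoly_left_roots : (\sum_(i < k) d i <= n.+1)%N -> (k <= n)%N ->
  left_roots (map_poly ratr (Fpoly n d) : {poly algC}).
Proof.
move=> le_d_n le_k_n; rewrite map_Fpoly_unity_roots.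
apply: left_roots_scale; first by rewrite signr_eq0.
apply: (@left_roots_shift_op_prod _ _ (n - k)); last 1 first.
- rewrite /binomX -[X in rfact X](subnKC le_k_n) shift_op_Xsub1X_rfact.
  apply: line_rfact_scale; rewrite !mulf_neq0 ?signr_eq0 ?invr_eq0 ?pnatr_eq0 -?lt0n //.
    by rewrite subnKC // ffact_gt0.
  exact: fact_gt0.
- by move: le_d_n; rewrite -size_unity_roots; move: (size zs) => m; lia.
- exact: unity_roots_circle_ne1.
Qed.

Lemma Fpoly_eq0 : k = n.+1 -> Fpoly n d = 0.
Proof.
move=> eq_k; apply/eqP; rewrite -(map_poly_eq0 (ratr : rat -> algC)).
rewrite map_Fpoly_unity_roots [in ('X - 1) ^+ k]eq_k exprS shift_opM.
rewrite /binomX -[n in rfact n]addn0.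
rewrite shift_op_Xsub1X_rfact /rfact big_ord0 alg_polyC shift_op_Xsub1_polyC.
by rewrite shift_op0r scaler0.
Qed.

End UnityRootFactorization.

Theorem theorem3p6 (n k : nat) (d : 'I_k -> nat) :
  (1 <= n)%N ->
  (forall i, 0 < d i)%N ->
  (\sum_(i < k) d i <= n.+1)%N ->
  forall j : nat, 0 <= (Fpoly n d)`_j.
Proof.
move=> _ d_gt0 le_d_n j.
have [le_k_n | lt_n_k] := leqP k n; last first.
  have le_k_d : (k <= \sum_(i < k) d i)%N.
    by rewrite -[k in (k <= _)%N]card_ord -sum1_card leq_sum.
  by rewrite Fpoly_eq0 ?coef0 //; apply/eqP; rewrite eqn_leq lt_n_k (leq_trans le_k_d).
rewrite -(ler0q algC) -coef_map.
apply: nonneg_coef_of_left_roots; first exact: conj_map_ratr.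
  exact: Fpoly_left_roots.
exact: horner_map_Fpoly1_gt0.
Qed.
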